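(* Let $\mathbb{K}\in\{\mathbb{R},\mathbb{C}\}$, $\star\in\{*,T\}$, $\epsilon_1,\epsilon_2\in\{1,-1\}$, and let $Q(\lambda)=\lambda^2M+\lambda D+K\in\mathbb{K}^{n\times n}[\lambda]$ satisfy $M^\star=\epsilon_1M$, $D^\star=\epsilon_2D$, $K^\star=\epsilon_1K$. Suppose $(X_c,\Lambda_c)\in\mathbb{K}^{n\times p_1}\times\mathbb{K}^{p_1\times p_1}$ and $(X_f,\Lambda_f)\in\mathbb{K}^{n\times p_2}\times\mathbb{K}^{p_2\times p_2}$ are invariant pairs of $Q(\lambda)$, and let $\Lambda_a\in\mathbb{K}^{p_1\times p_1}$. Let $P\in\mathbb{K}^{p_1\times p_1}$ be a nonsingular matrix such that $R:=X_c^\star MX_cP\Lambda_aP^{-1}+\epsilon_1\epsilon_2\Lambda_c^\star X_c^\star MX_c+X_c^\star DX_c$ is nonsingular, and assume $\sigma(\Lambda_c)\cap\sigma(\epsilon_1\epsilon_2\Lambda_f^\star)=\emptyset$. Let $Z=(\Lambda_c-P\Lambda_aP^{-1})R^{-1}$ and $\triangle M=MX_cZX_c^\star M$, $\triangle D=\epsilon_1\epsilon_2MX_cZ\Lambda_c^\star X_c^\star M+MX_cZX_c^\star D+MX_c\Lambda_cZX_c^\star M+DX_cZX_c^\star M$, $\triangle K=\epsilon_1\epsilon_2MX_c\Lambda_cZ\Lambda_c^\star X_c^\star M+MX_c\Lambda_cZX_c^\star D+\epsilon_1\epsilon_2DX_cZ\Lambda_c^\star X_c^\star M+DX_cZX_c^\star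 D$. Then $(X_a,\Lambda_a)$ with $X_a=X_cP$, and $(X_f,\Lambda_f)$, are invariant pairs of $Q_\triangle(\lambda)=\lambda^2(M+\triangle M)+\lambda(D+\triangle D)+(K+\triangle K)\in\mathbb{K}^{n\times n}[\lambda]$. Moreover, with $S:=X_c^\star MX_c\Lambda_c+\epsilon_1\epsilon_2\Lambda_c^\star X_c^\star MX_c+X_c^\star DX_c$, if $SP\Lambda_aP^{-1}=\epsilon_1(SP\Lambda_aP^{-1})^\star$, then $(M+\triangle M)^\star=\epsilon_1(M+\triangle M)$, $(D+\triangle D)^\star=\epsilon_2(D+\triangle D)$ and $(K+\triangle K)^\star=\epsilon_1(K+\triangle K)$.
   Context: For a matrix $A$, $A^*$ is the conjugate transpose and $A^T$ the transpose; $A^\star$ means $A^*$ if $\star=*$ and $A^T$ if $\star=T$. $\sigma(A)$ is the spectrum of a square matrix $A$. A pair $(X,\Lambda)\in\mathbb{K}^{n\times p}\times\mathbb{K}^{p\times p}$ is an invariant pair of $Q(\lambda)=\lambda^2M+\lambda D+K$ if $Q(X,\Lambda):=MX\Lambda^2+DX\Lambda+KX=0$. *)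

From HB Require Import structures.
From mathcomp Require Import all_boot all_order all_algebra.
From mathcomp Require Import all_real_closed.
From mathcomp Require Import reals.
Set Implicit Arguments. Unset Strict Implicit. Unset Printing Implicit Defensive.
Import Order.TTheory GRing.Theory Num.Theory.
Local Open Scope ring_scope.

Inductive startype := StarCT | StarT.

(* A^star, with conjK the complex conjugation on the scalar field K
   (the identity when K = R). *)
Definition mxstar (K : pzRingType) (conjK : K -> K) (s : startype) (m n : nat)
  (A : 'M[K]_(m, n)) : 'M[K]_(n, m) :=
  match s with
  | StarCT => map_mx conjK A^T
  | StarT => A^T
  end.

Definition invariant_pair (K : pzRingType) (n p : nat) (M D Km : 'M[K]_n)
  (X : 'M[K]_(n, p)) (La : 'M[K]_p) : Prop :=
  M *m X *m (La *m La) + D *m X *m La + Km *m X = 0.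

(* sigma(A) : the spectrum of a square matrix A, i.e. its eigenvalues taken
   in the algebraically closed field L (= C) via the embedding emb : K -> L. *)
Definition spectrum (K L : fieldType) (emb : K -> L) (p : nat) (A : 'M[K]_p)
  : pred L := fun z => eigenvalue (map_mx emb A) z.

Definition thm38_over (K L : fieldType) (conjK : K -> K) (emb : K -> L) : Prop :=
  forall (st : startype) (e1 e2 : K) (n p1 p2 : nat)
    (M D Km : 'M[K]_n)
    (Xc : 'M[K]_(n, p1)) (Lc : 'M[K]_p1)
    (Xf : 'M[K]_(n, p2)) (Lf : 'M[K]_p2)
    (La P : 'M[K]_p1),
  (e1 = 1 \/ e1 = -1) -> (e2 = 1 \/ e2 = -1) ->
  mxstar conjK st M = e1 *: M ->
  mxstar conjK st D = e2 *: D ->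
  mxstar conjK st Km = e1 *: Km ->
  invariant_pair M D Km Xc Lc ->
  invariant_pair M D Km Xf Lf ->
  P \in unitmx ->
  let star := mxstar conjK st in
  let PLaPi := P *m La *m invmx P in
  let R := star _ _ Xc *m M *m Xc *m PLaPi
           + (e1 * e2) *: (star _ _ Lc *m star _ _ Xc *m M *m Xc)
           + star _ _ Xc *m D *m Xc in
  R \in unitmx ->
  (forall z : L, ~ (z \in spectrum emb Lc /\
                    z \in spectrum emb ((e1 * e2) *: star _ _ Lf))) ->
  let Z := (Lc - PLaPi) *m invmx R in
  let XcS := star _ _ Xc in
  let LcS := star _ _ Lc in
  let dM := M *m Xc *m Z *m XcS *m M in
  let dD := (e1 * e2) *: (M *m Xc *m Z *m LcS *m XcS *m M)
            + M *m Xc *m Z *m XcS *m D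
            + M *m Xc *m Lc *m Z *m XcS *m M
            + D *m Xc *m Z *m XcS *m M in
  let dK := (e1 * e2) *: (M *m Xc *m Lc *m Z *m LcS *m XcS *m M)
            + M *m Xc *m Lc *m Z *m XcS *m D
            + (e1 * e2) *: (D *m Xc *m Z *m LcS *m XcS *m M)
            + D *m Xc *m Z *m XcS *m D in
  let Xa := Xc *m P in
  [/\ invariant_pair (M + dM) (D + dD) (Km + dK) Xa La,
      invariant_pair (M + dM) (D + dD) (Km + dK) Xf Lf
    & let S := XcS *m M *m Xc *m Lc + (e1 * e2) *: (LcS *m XcS *m M *m Xc)
               + XcS *m D *m Xc in
      S *m PLaPi = e1 *: star _ _ (S *m PLaPi) ->
      [/\ star _ _ (M + dM) = e1 *: (M + dM),
          star _ _ (D + dD) = e2 *: (D + dD)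
        & star _ _ (Km + dK) = e1 *: (Km + dK)]].

From HB Require Import structures.
From mathcomp Require Import all_boot all_order all_algebra.
From mathcomp Require Import all_real_closed.
From mathcomp Require Import reals.
Set Implicit Arguments. Unset Strict Implicit. Unset Printing Implicit Defensive.
Import GRing.Theory Num.Theory.
Local Open Scope ring_scope.

(* Write U := Xc^* M, Lam := e1 e2 Lc^* and V := Lam Xc^* M + Xc^* D.  The perturbation is
   the low-rank update dM = A Z U, dD = A Z V + B Z U, dK = B Z V with A := M Xc and
   B := M Xc Lc + D Xc, so that Q_d(X, G) = Q(X, G) + A Z W G + B Z W, W := U X G + V X.
   For Xa = Xc P one has Q_d(Xc P, La) = Q_d(Xc, T) P with T := P La P^-1; there W = R,
   hence Z W = Lc - T and the correction telescopes back to Q(Xc, Lc) = 0.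
   Starring Q(Xc, Lc) = 0 makes (Xc^*, Lam) a left invariant pair, which gives
   W(X, G) G = Lam W(X, G) for every invariant pair (X, G).  For (Xf, Lf), the starred
   equation is a homogeneous Sylvester equation for Lc and e1 e2 Lf^*, whose spectra are
   disjoint, so W = 0.
   For the symmetry claims, A^* = e1 U and B^* = e2 V, so it suffices that Z^* = e1 Z.  With
   S = W(Xc, Lc), E := Lc - T and N := Xc^* M Xc, we have R = S - N E, S^* = e2 S,
   Lc^* S = e1 e2 S Lc and, by hypothesis, T^* S = e1 e2 S T; hence E^* R = e1 R^* E. *)

Lemma horner_mx_intertwine (R : comNzRingType) m n (X : 'M[R]_(m.+1, n.+1))
    (A : 'M_n.+1) (B : 'M_m.+1) (q : {poly R}) :
  X *m A = B *m X -> X *m horner_mx A q = horner_mx B q *m X.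
Proof.
move=> XA; elim/poly_ind: q => [|q c IHq]; first by rewrite !rmorph0 mulmx0 mul0mx.
rewrite !rmorphD !rmorphM /= !horner_mx_X !horner_mx_C -!mulmxE.
by rewrite mulmxDr mulmxDl mulmxA IHq -!mulmxA XA scalar_mxC.
Qed.

Lemma mx_intertwine_eq0 (L : closedFieldType) m n (X : 'M[L]_(m, n)) A B :
  X *m A = B *m X -> (forall z, ~ (eigenvalue A z /\ eigenvalue B z)) -> X = 0.
Proof.
case: n X A => [|n] X A; first by move=> *; rewrite thinmx0.
case: m X B => [|m] X B; first by move=> *; rewrite flatmx0.
move=> XA disjAB; have [r charA] := closed_field_poly_normal (char_poly A).
rewrite (monicP (char_poly_monic A)) scale1r in charA.
have eigA z : z \in r -> eigenvalue A z.
  by move=> zr; rewrite eigenvalue_root_char charA root_prod_XsubC.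
have charB_unit : horner_mx B (char_poly A) \in unitmx.
  rewrite charA rmorph_prod big_seq.
  apply: (big_ind (fun C : 'M_m.+1 => C \in unitmx)) => [|C C' uC uC'|z zr].
  - exact: unitmx1.
  - by rewrite -mulmxE unitmx_mul uC uC'.
  rewrite rmorphB /= horner_mx_X horner_mx_C -row_free_unit -kermx_eq0.
  by apply/negPn/negP => eigB; apply: (disjAB z); split; [exact: eigA|].
have charB_X : horner_mx B (char_poly A) *m X = 0.
  by rewrite -(horner_mx_intertwine _ XA) Cayley_Hamilton mulmx0.
by rewrite -(mulKmx charB_unit X) charB_X mulmx0.
Qed.

Ltac mx_expand :=
  repeat progress rewrite ?mulmxDl ?mulmxDr ?mulmxBl ?mulmxBr ?mulmxN ?mulNmx
    ?mulmxA ?scalerDr ?scalerBr ?scalerN ?scaleNr ?scalerA -?scalemxAl -?scalemxAr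
    ?opprD ?opprK.

Ltac move_last b := repeat first [erewrite (addrAC _ b) | erewrite (addrC b)].

Ltac cancel_opposites :=
  repeat match goal with
  | |- context [- ?b] => move_last b; move_last (- b);
                         first [rewrite subrr | rewrite -addrA subrr ?addr0 ?add0r]
  end.

(* Closes identities between sums of scaled matrix products: expand, left-associate,
   abstract every product as an atom and cancel opposite atoms.  Local definitions
   must be cleared first, since the rewrites see through their bodies. *)
Ltac mx_ring :=
  mx_expand; apply/eqP; rewrite -subr_eq0; apply/eqP; rewrite ?opprD ?opprK ?addrA;
  repeat (let x := fresh "x" in set x := (_ *m _); clearbody x);
  cancel_opposites; done.

Lemma sign_sq (R : pzRingType) (e : R) : e = 1 \/ e = -1 -> e * e = 1.
Proof. by case=> ->; rewrite ?mulrNN mulr1. Qed.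

Lemma rmorph_sign (R : pzRingType) (f : {rmorphism R -> R}) (e : R) :
  e = 1 \/ e = -1 -> f e = e.
Proof. by case=> ->; rewrite ?rmorph1 ?rmorphN1. Qed.

Ltac sign_cases e1_sign e2_sign :=
  let E1 := fresh in let E2 := fresh in
  case: e1_sign => E1; case: e2_sign => E2; rewrite ?E1 ?E2; mx_expand;
  repeat progress rewrite ?mulr1 ?mul1r ?mulrN ?mulNr ?opprK ?scale1r ?scaleNr ?scalerN.

Definition qeval (R : pzRingType) n p (M D Km : 'M[R]_n) (X : 'M[R]_(n, p))
    (La : 'M[R]_p) : 'M[R]_(n, p) :=
  M *m X *m (La *m La) + D *m X *m La + Km *m X.

Definition lqeval (R : pzRingType) n p (M D Km : 'M[R]_n) (Y : 'M[R]_(p, n))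
    (La : 'M[R]_p) : 'M[R]_(p, n) :=
  La *m La *m Y *m M + La *m Y *m D + Y *m Km.

Section QuadraticEvaluation.
Variables (R : pzRingType) (n : nat) (M D Km : 'M[R]_n).

Lemma qeval_intertwine p q (X : 'M_(n, p)) (P : 'M_(p, q)) T La :
  T *m P = P *m La -> qeval M D Km (X *m P) La = qeval M D Km X T *m P.
Proof.
move=> TP; have TTP : T *m (T *m P) = P *m (La *m La) by rewrite TP !mulmxA TP.
by rewrite /qeval !mulmxDl -!mulmxA TTP TP.
Qed.

Lemma qeval_shift p (X : 'M_(n, p)) L T :
  qeval M D Km X T + M *m X *m (L - T) *m T + (M *m X *m L + D *m X) *m (L - T)
  = qeval M D Km X L.
Proof. rewrite /qeval; mx_ring. Qed.

Lemma qeval_lowrank_update r p (A B : 'M_(n, r)) (U V : 'M_(r, n)) Z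
    (X : 'M_(n, p)) La :
  let W := U *m X *m La + V *m X in
  qeval (M + A *m Z *m U) (D + (A *m Z *m V + B *m Z *m U)) (Km + B *m Z *m V) X La
  = qeval M D Km X La + A *m Z *m W *m La + B *m Z *m W.
Proof. rewrite /qeval; mx_ring. Qed.

Lemma qeval_lqeval_cross p q (Y : 'M_(p, n)) Lam (X : 'M_(n, q)) L :
  let W := Y *m M *m X *m L + Lam *m Y *m M *m X + Y *m D *m X in
  W *m L - Lam *m W = Y *m qeval M D Km X L - lqeval M D Km Y Lam *m X.
Proof. rewrite /qeval /lqeval; mx_ring. Qed.

End QuadraticEvaluation.

Section MatrixStar.
Variables (K : fieldType) (f : {rmorphism K -> K}) (st : startype).
Local Notation star := (mxstar f st).

Lemma starM m n p (A : 'M[K]_(m, n)) (B : 'M_(n, p)) :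
  star (A *m B) = star B *m star A.
Proof. by case: st => /=; rewrite trmx_mul // map_mxM. Qed.

Lemma starD m n (A B : 'M[K]_(m, n)) : star (A + B) = star A + star B.
Proof. by case: st => /=; rewrite linearD //= map_mxD. Qed.

Lemma starN m n (A : 'M[K]_(m, n)) : star (- A) = - star A.
Proof. by case: st => /=; rewrite linearN //= map_mxN. Qed.

Lemma starB m n (A B : 'M[K]_(m, n)) : star (A - B) = star A - star B.
Proof. by rewrite starD starN. Qed.

Lemma star0 m n : star (0 : 'M[K]_(m, n)) = 0.
Proof. by rewrite -[0 in LHS](subrr 0) starB subrr. Qed.

Lemma starZ m n c (A : 'M[K]_(m, n)) : f c = c -> star (c *: A) = c *: star A.
Proof. by move=> fc; case: st => /=; rewrite linearZ //= map_mxZ fc. Qed.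

Lemma starV n (A : 'M[K]_n) : star (invmx A) = invmx (star A).
Proof. by case: st => /=; rewrite trmx_inv // map_invmx. Qed.

Lemma star_unit n (A : 'M[K]_n) : (star A \in unitmx) = (A \in unitmx).
Proof. by case: st => /=; rewrite ?map_unitmx unitmx_tr. Qed.

Lemma star_qeval n p (M D Km : 'M[K]_n) (X : 'M_(n, p)) La :
  star (qeval M D Km X La) = lqeval (star M) (star D) (star Km) (star X) (star La).
Proof. by rewrite /qeval /lqeval !starD !starM !mulmxA. Qed.

Hypothesis f_involutive : involutive f.

Lemma starK m n (A : 'M[K]_(m, n)) : star (star A) = A.
Proof.
case: st => /=; rewrite ?trmxK // map_trmx trmxK -map_mx_comp.
by apply/matrixP => i j; rewrite mxE /= f_involutive.
Qed.

Lemma star_sign_swap m n (A : 'M[K]_(m, n)) B e :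
  e = 1 \/ e = -1 -> star A = e *: B -> star B = e *: A.
Proof.
move=> e_sign starA; rewrite -[A]starK starA.
by rewrite starZ ?rmorph_sign // scalerA sign_sq // scale1r.
Qed.

End MatrixStar.

Section StarUpdate.
Variables (K : fieldType) (f : {rmorphism K -> K}) (st : startype).
Hypothesis f_involutive : involutive f.
Local Notation star := (mxstar f st).
Variables (e1 e2 : K).
Hypotheses (e1_sign : e1 = 1 \/ e1 = -1) (e2_sign : e2 = 1 \/ e2 = -1).
Variables (n r : nat) (A B : 'M[K]_(n, r)) (U V : 'M[K]_(r, n)) (Z : 'M[K]_r).
Hypotheses (starA : star A = e1 *: U) (starB : star B = e2 *: V).
Hypothesis starZ_sym : star Z = e1 *: Z.

Lemma star_lowrank_update (M D Km : 'M[K]_n) :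
    star M = e1 *: M -> star D = e2 *: D -> star Km = e1 *: Km ->
  [/\ star (M + A *m Z *m U) = e1 *: (M + A *m Z *m U),
      star (D + (A *m Z *m V + B *m Z *m U)) = e2 *: (D + (A *m Z *m V + B *m Z *m U))
    & star (Km + B *m Z *m V) = e1 *: (Km + B *m Z *m V)].
Proof.
have starU := star_sign_swap f_involutive e1_sign starA.
have starV := star_sign_swap f_involutive e2_sign starB.
move=> hM hD hK; rewrite !starD !starM starA starB starU starV starZ_sym hM hD hK.
by split; sign_cases e1_sign e2_sign; mx_ring.
Qed.

End StarUpdate.

Section StructuredPerturbation.
Variables (K : fieldType) (f : {rmorphism K -> K}) (st : startype).
Hypothesis f_involutive : involutive f.
Local Notation star := (mxstar f st).
Variables (e1 e2 : K).
Hypotheses (e1_sign : e1 = 1 \/ e1 = -1) (e2_sign : e2 = 1 \/ e2 = -1).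
Variables (n p : nat) (M D Km : 'M[K]_n) (Xc : 'M[K]_(n, p)) (Lc : 'M[K]_p).
Hypotheses (starM_sym : star M = e1 *: M) (starD_sym : star D = e2 *: D).
Hypothesis starKm_sym : star Km = e1 *: Km.
Hypothesis Xc_Lc_pair : qeval M D Km Xc Lc = 0.

Local Notation Lam := ((e1 * e2) *: star Lc).
Local Notation U := (star Xc *m M).
Local Notation V := (Lam *m star Xc *m M + star Xc *m D).
Local Notation W X L := (U *m X *m L + V *m X).

Lemma lqeval_star_pair : lqeval M D Km (star Xc) Lam = 0.
Proof.
have := congr1 (@mxstar _ f st n p) Xc_Lc_pair.
rewrite star0 star_qeval starM_sym starD_sym starKm_sym => star_pair.
suff -> : lqeval M D Km (star Xc) Lam
          = e1 *: lqeval (e1 *: M) (e2 *: D) (e1 *: Km) (star Xc) (star Lc).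
  by rewrite star_pair scaler0.
rewrite /lqeval; sign_cases e1_sign e2_sign; mx_ring.
Qed.

Lemma sign_mul : e1 * e2 = 1 \/ e1 * e2 = -1.
Proof.
by case: e1_sign e2_sign => -> [] ->; rewrite ?mulr1 ?mul1r ?mulN1r ?opprK; [left|right|right|left].
Qed.

Lemma f_sign_mul : f (e1 * e2) = e1 * e2.
Proof. exact: rmorph_sign sign_mul. Qed.

Lemma W_intertwine q (X : 'M_(n, q)) L :
  qeval M D Km X L = 0 -> W X L *m L = Lam *m W X L.
Proof.
move=> XL_pair; apply/eqP; rewrite -subr_eq0; apply/eqP.
have := qeval_lqeval_cross M D Km (star Xc) Lam X L.
by rewrite XL_pair lqeval_star_pair mulmx0 mul0mx subrr /= -addrA -mulmxDl.
Qed.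

Lemma W_eq0 (L : closedFieldType) (emb : {rmorphism K -> L}) q (Xf : 'M_(n, q)) Lf :
    qeval M D Km Xf Lf = 0 ->
    (forall z, ~ (z \in spectrum emb Lc /\ z \in spectrum emb ((e1 * e2) *: star Lf))) ->
  W Xf Lf = 0.
Proof.
move=> Xf_pair disj; set Y := W Xf Lf.
have starYL : star Y *m Lc = ((e1 * e2) *: star Lf) *m star Y.
  have := congr1 (@mxstar _ f st p q) (W_intertwine Xf_pair).
  rewrite -/Y !starM (starZ st _ f_sign_mul) starK // => starLY.
  by rewrite -scalemxAl starLY -scalemxAr scalerA (sign_sq sign_mul) scale1r.
have /eqP : map_mx emb (star Y) = 0.
  by apply: mx_intertwine_eq0 disj; rewrite -!map_mxM starYL.
rewrite map_mx_eq0 => /eqP/(congr1 (@mxstar _ f st q p)).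
by rewrite starK // star0.
Qed.

Lemma star_Z_sym T :
    W Xc T \in unitmx -> W Xc Lc *m T = e1 *: star (W Xc Lc *m T) ->
  star ((Lc - T) *m invmx (W Xc T)) = e1 *: ((Lc - T) *m invmx (W Xc T)).
Proof.
move=> R_unit S_sym.
set S := W Xc Lc in S_sym *; set R := W Xc T in R_unit *.
set E := Lc - T; set N := U *m Xc.
have R_eq : R = S - N *m E by rewrite /R /S /N /E; mx_ring.
have starN : star N = e1 *: N by rewrite /N !starM starK // starM_sym; mx_ring.
have starS : star S = e2 *: S.
  rewrite /S !starD !starM starD !starM (starZ st _ f_sign_mul) !starK // starM_sym starD_sym.
  by sign_cases e1_sign e2_sign; mx_ring.
have LcS : star Lc *m S = (e1 * e2) *: (S *m Lc).
  by rewrite (W_intertwine Xc_Lc_pair) -scalemxAl scalerA (sign_sq sign_mul) scale1r.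
have TS : star T *m S = (e1 * e2) *: (S *m T).
  by rewrite S_sym starM starS -scalemxAr !scalerA; sign_cases e1_sign e2_sign.
have ES : star E *m S = (e1 * e2) *: (S *m E) by rewrite starB mulmxBl LcS TS mulmxBr scalerBr.
have key : star E *m R = e1 *: (star R *m E).
  clearbody E; rewrite R_eq starB starM starS starN mulmxBr mulmxA ES.
  by clearbody S N R; sign_cases e1_sign e2_sign; mx_ring.
rewrite starM starV -[star E](mulmxK R_unit) key -scalemxAl -scalemxAr !mulmxA.
by rewrite mulVmx ?star_unit // mul1mx.
Qed.

Local Notation A := (M *m Xc).
Local Notation B := (M *m Xc *m Lc + D *m Xc).
Local Notation Q_update Z :=
  (qeval (M + A *m Z *m U) (D + (A *m Z *m V + B *m Z *m U)) (Km + B *m Z *m V)).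

Lemma update_shifted_pair T Z : Z *m W Xc T = Lc - T -> Q_update Z Xc T = 0.
Proof.
move=> ZW; rewrite qeval_lowrank_update /= -!(mulmxA _ Z) ZW qeval_shift.
exact: Xc_Lc_pair.
Qed.

Lemma update_disjoint_pair (L : closedFieldType) (emb : {rmorphism K -> L}) Z q
    (Xf : 'M_(n, q)) Lf :
    qeval M D Km Xf Lf = 0 ->
    (forall z, ~ (z \in spectrum emb Lc /\ z \in spectrum emb ((e1 * e2) *: star Lf))) ->
  Q_update Z Xf Lf = 0.
Proof.
move=> Xf_pair disj; rewrite qeval_lowrank_update /= (W_eq0 Xf_pair disj) Xf_pair.
by rewrite !mulmx0 mul0mx !addr0.
Qed.

Lemma update_sym T :
    W Xc T \in unitmx -> W Xc Lc *m T = e1 *: star (W Xc Lc *m T) ->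
  let Z := (Lc - T) *m invmx (W Xc T) in
  [/\ star (M + A *m Z *m U) = e1 *: (M + A *m Z *m U),
      star (D + (A *m Z *m V + B *m Z *m U)) = e2 *: (D + (A *m Z *m V + B *m Z *m U))
    & star (Km + B *m Z *m V) = e1 *: (Km + B *m Z *m V)].
Proof.
move=> R_unit S_sym Z.
have starA : star A = e1 *: U by rewrite starM starM_sym -scalemxAr.
have starB : star B = e2 *: V.
  rewrite starD !starM starM_sym starD_sym.
  by sign_cases e1_sign e2_sign; mx_ring.
exact: (star_lowrank_update f_involutive e1_sign e2_sign starA starB (star_Z_sym R_unit S_sym)).
Qed.

End StructuredPerturbation.

Lemma thm38_over_involutive (K : fieldType) (L : closedFieldType)
    (f : {rmorphism K -> K}) (emb : {rmorphism K -> L}) :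
  involutive f -> thm38_over f emb.
Proof.
move=> f_invol st e1 e2 n p1 p2 M D Km Xc Lc Xf Lf La P e1_sign e2_sign hM hD hK
  Xc_pair Xf_pair P_unit star T R R_unit disj Z XcS LcS dM dD dK Xa.
subst star.
have TP : T *m P = P *m La by rewrite mulmxKV.
have R_eq : R = XcS *m M *m Xc *m T + ((e1 * e2) *: LcS *m XcS *m M + XcS *m D) *m Xc.
  by rewrite /R; mx_ring.
have ZR : Z *m R = Lc - T by rewrite mulmxKV.
have Z_eq : Z = (Lc - T) *m invmx R by [].
rewrite R_eq in R_unit ZR Z_eq; clearbody T Z.
have [-> -> ->] : [/\ dM = M *m Xc *m Z *m (XcS *m M),
    dD = M *m Xc *m Z *m ((e1 * e2) *: LcS *m XcS *m M + XcS *m D)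
         + (M *m Xc *m Lc + D *m Xc) *m Z *m (XcS *m M)
  & dK = (M *m Xc *m Lc + D *m Xc) *m Z *m ((e1 * e2) *: LcS *m XcS *m M + XcS *m D)].
  by split; rewrite /dM /dD /dK; mx_ring.
split.
- apply: etrans (qeval_intertwine _ _ _ _ TP) _.
  by rewrite (update_shifted_pair Xc_pair ZR) mul0mx.
- exact: (update_disjoint_pair f_invol e1_sign e2_sign hM hD hK Xc_pair Z Xf_pair disj).
move=> S S_sym.
have S_eq : S = XcS *m M *m Xc *m Lc + ((e1 * e2) *: LcS *m XcS *m M + XcS *m D) *m Xc.
  by rewrite /S; mx_ring.
rewrite S_eq in S_sym; rewrite Z_eq.
exact: (update_sym f_invol e1_sign e2_sign hM hD hK Xc_pair R_unit S_sym).
Qed.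

Unset Implicit Arguments.

Theorem theorem3p8 (R : realType) :
  thm38_over (@id R) (real_complex R) /\
  thm38_over (fun z : R[i] => Num.conj z) (@id R[i]).
Proof.
split; first exact: (@thm38_over_involutive R R[i] idfun (real_complex R) (fun _ => erefl)).
exact: (@thm38_over_involutive R[i] R[i] Num.conj idfun (@conjCK R[i])).
Qed.
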